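(* Let $S$ be the class of Schreier split epimorphisms in the category $\mathsf{SRng}$ of semirings. If $B$ is a ring (i.e. a semiring whose additive monoid is a group) with $B\neq 0$, then the change-of-base functor along the unique morphism $0\to B$, namely the kernel functor $\mathrm{Ker}_B\colon SPt_B(\mathsf{SRng})\to SPt_0(\mathsf{SRng})\cong\mathsf{SRng}$, does not have a right adjoint. In particular $\mathsf{SRng}$ is not $S$-locally algebraically cartesian closed.
   Context: A semiring is a set with a commutative monoid structure $(+,0)$ and an associative (not necessarily unital) multiplication distributing over $+$ on both sides, with $0x=x0=0$. A point is a split epimorphism $f\colon A\to B$ with chosen section $s$; $Pt_B$ denotes points over $B$; for $h\colon E\to B$, $h^*$ pulls points back along $h$. A split epimorphism $(A,B,f,s)$ of semirings is Schreier if each $a\in A$ can be written uniquely as $a=\alpha+sf(a)$ with $f(\alpha)=0$. $SPt_B(\mathsf{SRng})$ is the full subcategory of $Pt_B(\mathsf{SRng})$ of Schreier points. A category is $S$-LACC if for every morphism $h$ the functor $h^*$ between the categories of $S$-points has a right adjoint. *)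

From Stdlib Require Import ProofIrrelevance.

Set Implicit Arguments.

Record SRng := {
  car :> Type;
  sadd : car -> car -> car;
  szero : car;
  smul : car -> car -> car;
  saddA : forall x y z, sadd x (sadd y z) = sadd (sadd x y) z;
  saddC : forall x y, sadd x y = sadd y x;
  sadd0 : forall x, sadd x szero = x;
  smulA : forall x y z, smul x (smul y z) = smul (smul x y) z;
  smulDl : forall x y z, smul (sadd x y) z = sadd (smul x z) (smul y z);
  smulDr : forall x y z, smul x (sadd y z) = sadd (smul x y) (smul x z);
  smul0l : forall x, smul szero x = szero;
  smul0r : forall x, smul x szero = szero
}.

Arguments sadd {s}.
Arguments szero {s}.
Arguments smul {s}.

Record hom (A B : SRng) := {
  fn :> A -> B;
  fn_add : forall x y, fn (sadd x y) = sadd (fn x) (fn y);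
  fn_zero : fn szero = szero;
  fn_mul : forall x y, fn (smul x y) = smul (fn x) (fn y)
}.

Definition is_ring (B : SRng) : Prop :=
  forall b : B, exists b' : B, sadd b b' = szero.

Definition nontrivial (B : SRng) : Prop := exists b : B, b <> szero.

Definition zeroSRng : SRng :=
  {| car := unit; sadd := fun _ _ => tt; szero := tt; smul := fun _ _ => tt;
     saddA := fun _ _ _ => eq_refl; saddC := fun _ _ => eq_refl;
     sadd0 := fun x => match x with tt => eq_refl end;
     smulA := fun _ _ _ => eq_refl; smulDl := fun _ _ _ => eq_refl;
     smulDr := fun _ _ _ => eq_refl; smul0l := fun _ => eq_refl;
     smul0r := fun _ => eq_refl |}.

Lemma zero_hom_add (B : SRng) (x y : zeroSRng) :
  (fun _ : zeroSRng => @szero B) (sadd x y) =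
  sadd ((fun _ : zeroSRng => @szero B) x) ((fun _ : zeroSRng => @szero B) y).
Proof. simpl. symmetry. apply sadd0. Qed.

Lemma zero_hom_mul (B : SRng) (x y : zeroSRng) :
  (fun _ : zeroSRng => @szero B) (smul x y) =
  smul ((fun _ : zeroSRng => @szero B) x) ((fun _ : zeroSRng => @szero B) y).
Proof. simpl. symmetry. apply smul0l. Qed.

Definition initial_hom (B : SRng) : hom zeroSRng B :=
  {| fn := fun _ => szero; fn_add := @zero_hom_add B;
     fn_zero := eq_refl; fn_mul := @zero_hom_mul B |}.

Record point (B : SRng) := {
  pA : SRng;
  pf : hom pA B;
  ps : hom B pA;
  psec : forall b, pf (ps b) = b
}.

Definition Schreier (B : SRng) (P : point B) : Prop :=
  forall a : pA P,
    exists alpha : pA P,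
      (pf P alpha = szero /\ a = sadd alpha (ps P (pf P a))) /\
      forall alpha' : pA P,
        pf P alpha' = szero /\ a = sadd alpha' (ps P (pf P a)) -> alpha' = alpha.

Record phom (B : SRng) (P Q : point B) := {
  pg :> hom (pA P) (pA Q);
  pg_f : forall a, pf Q (pg a) = pf P a;
  pg_s : forall b, pg (ps P b) = ps Q b
}.

Section Pullback.
Variables (E B : SRng) (h : hom E B) (P : point B).

Definition pbcar := { x : pA P * E | pf P (fst x) = h (snd x) }.

Lemma pb_eq (x y : pbcar) : proj1_sig x = proj1_sig y -> x = y.
Proof.
  destruct x as [x px], y as [y py]; simpl; intros ->.
  f_equal; apply proof_irrelevance.
Qed.

Definition pbadd (x y : pbcar) : pbcar.
Proof.
  refine (exist _ (sadd (fst (proj1_sig x)) (fst (proj1_sig y)),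
                   sadd (snd (proj1_sig x)) (snd (proj1_sig y))) _).
  simpl. rewrite fn_add, fn_add, (proj2_sig x), (proj2_sig y). reflexivity.
Defined.

Definition pbmul (x y : pbcar) : pbcar.
Proof.
  refine (exist _ (smul (fst (proj1_sig x)) (fst (proj1_sig y)),
                   smul (snd (proj1_sig x)) (snd (proj1_sig y))) _).
  simpl. rewrite fn_mul, fn_mul, (proj2_sig x), (proj2_sig y). reflexivity.
Defined.

Definition pbzero : pbcar.
Proof.
  refine (exist _ (szero, szero) _). simpl. rewrite !fn_zero. reflexivity.
Defined.

Ltac pbsolve lem :=
  intros; apply pb_eq; simpl; f_equal; apply lem.

Definition pbSRng : SRng.
Proof.
  refine {| car := pbcar; sadd := pbadd; szero := pbzero; smul := pbmul |}.
  all: try (pbsolve saddA); try (pbsolve saddC); try (pbsolve sadd0);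
       try (pbsolve smulA); try (pbsolve smulDl); try (pbsolve smulDr);
       try (pbsolve smul0l); try (pbsolve smul0r).
  intros [[a e] p]; apply pb_eq; simpl; rewrite !sadd0; reflexivity.
Defined.

Definition pb_proj : hom pbSRng E.
Proof.
  refine {| fn := fun x : pbSRng => snd (proj1_sig x) |}; reflexivity.
Defined.

Definition pb_sec_fn (e : E) : pbSRng.
Proof.
  refine (exist _ (ps P (h e), e) _). simpl. apply psec.
Defined.

Definition pb_sec : hom E pbSRng.
Proof.
  refine {| fn := pb_sec_fn |}.
  - intros; apply pb_eq; simpl; rewrite fn_add, fn_add; reflexivity.
  - apply pb_eq; simpl; rewrite !fn_zero; reflexivity.
  - intros; apply pb_eq; simpl; rewrite fn_mul, fn_mul; reflexivity.
Defined.

Definition pullback : point E.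
Proof.
  refine {| pA := pbSRng; pf := pb_proj; ps := pb_sec |}.
  intros; reflexivity.
Defined.

End Pullback.

Section PullbackMap.
Variables (E B : SRng) (h : hom E B) (P Q : point B) (g : phom P Q).

Definition pbmap_fn (x : pbSRng h P) : pbSRng h Q.
Proof.
  refine (exist _ (g (fst (proj1_sig x)), snd (proj1_sig x)) _).
  simpl. rewrite pg_f. apply (proj2_sig x).
Defined.

Definition pbmap_hom : hom (pbSRng h P) (pbSRng h Q).
Proof.
  refine {| fn := pbmap_fn |}.
  - intros; apply pb_eq; simpl; rewrite fn_add; reflexivity.
  - apply pb_eq; simpl; rewrite fn_zero; reflexivity.
  - intros; apply pb_eq; simpl; rewrite fn_mul; reflexivity.
Defined.

Definition pullback_map : phom (pullback h P) (pullback h Q).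
Proof.
  refine (@Build_phom E (pullback h P) (pullback h Q) pbmap_hom _ _).
  - intros; reflexivity.
  - intros; apply pb_eq; simpl; rewrite pg_s; reflexivity.
Defined.

End PullbackMap.

(* The functor h^* : SPt_B -> SPt_E has a right adjoint, expressed by the
   existence of a universal arrow (terminal object of the comma category
   h^* / Q) for every Schreier point Q over E (Mac Lane, Thm IV.1.2).
   Morphisms of points are compared extensionally. *)
Definition SHasRightAdjoint (E B : SRng) (h : hom E B) : Prop :=
  forall Q : point E, Schreier Q ->
    exists (R : point B) (eps : phom (pullback h R) Q),
      Schreier R /\
      forall (P : point B), Schreier P ->
        forall k : phom (pullback h P) Q,
          exists g : phom P R,
            (forall x, eps (pullback_map h g x) = k x) /\
            forall g' : phom P R,
              (forall x, eps (pullback_map h g' x) = k x) ->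
              forall a, g' a = g a.

Definition S_LACC : Prop :=
  forall (E B : SRng) (h : hom E B), SHasRightAdjoint h.

(** Fix [b0 <> 0] in [B] and suppose the kernel functor [h^*] along
    [h : 0 -> B] has a right adjoint.  Take the point [Q] over [0] whose
    kernel [X] contains [x] and [z] with [x * z = b0 <> 0].  The element [x]
    comes from a point over [B] in which [x * s b0 = 0], and [z] from a point
    over [B] in which [z = s b0 * y].  Transporting both along the universal
    arrows into the right adjoint [R], the images satisfy
    [x * z = x * s b0 * y = 0] in [R]; the counit [Ker R -> X] is multiplicative,
    so [x * z = 0] in [X], a contradiction.  The argument only needs [B] to be
    a nonzero semiring, and [ℕ] is such a semiring. *)

From Stdlib Require Import PeanoNat Lia.

Fixpoint natmul {A : SRng} (n : nat) (a : A) : A :=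
  match n with O => szero | S k => sadd a (natmul k a) end.

Section SemiringTheory.
Variable A : SRng.

Lemma sadd0l (x : A) : sadd szero x = x.
Proof. rewrite saddC; apply sadd0. Qed.

Lemma saddACA (a b c d : A) :
  sadd (sadd a b) (sadd c d) = sadd (sadd a c) (sadd b d).
Proof.
  rewrite <- !saddA; f_equal.
  rewrite (saddA _ b c d), (saddC _ b c), <- saddA; reflexivity.
Qed.

Lemma natmulDr n m (a : A) : natmul (n + m) a = sadd (natmul n a) (natmul m a).
Proof.
  induction n as [|n IHn]; simpl.
  - now rewrite sadd0l.
  - now rewrite IHn, saddA.
Qed.

Lemma natmulDl n (a b : A) : natmul n (sadd a b) = sadd (natmul n a) (natmul n b).
Proof.
  induction n as [|n IHn]; simpl.
  - now rewrite sadd0.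
  - rewrite IHn; apply saddACA.
Qed.

Lemma natmul0 n : natmul n (@szero A) = szero.
Proof.
  induction n as [|n IHn]; simpl.
  - reflexivity.
  - rewrite IHn; apply sadd0.
Qed.

Lemma smul_natmulr n (a b : A) : smul a (natmul n b) = natmul n (smul a b).
Proof.
  induction n as [|n IHn]; simpl.
  - apply smul0r.
  - now rewrite smulDr, IHn.
Qed.

End SemiringTheory.

Lemma phom_smul_sectionl (B : SRng) (P R : point B) (g : phom P R) b a :
  smul (ps R b) (g a) = g (smul (ps P b) a).
Proof. now rewrite fn_mul, pg_s. Qed.

Lemma phom_smul_sectionr (B : SRng) (P R : point B) (g : phom P R) a b :
  smul (g a) (ps R b) = g (smul a (ps P b)).
Proof. now rewrite fn_mul, pg_s. Qed.

Definition terminal_hom (A : SRng) : hom A zeroSRng.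
Proof. refine {| fn := (fun _ => tt) : A -> zeroSRng |}; reflexivity. Defined.

Lemma Schreier_over_zero (Q : point zeroSRng) : Schreier Q.
Proof.
  intros a.
  assert (fa : pf Q a = szero) by now destruct (pf Q a).
  exists a; rewrite fa, fn_zero, sadd0; split.
  - now split.
  - intros a' [_ Ha]; now rewrite Ha, sadd0.
Qed.

Definition zero_point_phom {P Q : point zeroSRng} (k : hom (pA P) (pA Q)) :
  phom P Q.
Proof.
  refine (@Build_phom zeroSRng P Q k _ _).
  - intros a; now destruct (pf Q (k a)), (pf P a).
  - intros []; transitivity (@szero (pA Q)).
    + rewrite <- (fn_zero k); f_equal; apply (fn_zero (ps P)).
    + symmetry; apply (fn_zero (ps Q)).
Defined.

Section Counterexample.
Variable B : SRng.

Definition annNat : SRng.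
Proof.
  refine {| car := (nat * B)%type;
            sadd := fun '(n, b) '(n', b') => (n + n', sadd b b')%nat;
            szero := (0%nat, szero);
            smul := fun '(_, b) '(_, b') => (0%nat, smul b b') |}.
  - intros [n b] [n' b'] [n'' b'']; simpl; now rewrite saddA, Nat.add_assoc.
  - intros [n b] [n' b']; simpl; now rewrite saddC, Nat.add_comm.
  - intros [n b]; simpl; now rewrite sadd0, Nat.add_0_r.
  - intros [n b] [n' b'] [n'' b'']; simpl; now rewrite smulA.
  - intros [n b] [n' b'] [n'' b'']; simpl; now rewrite smulDl.
  - intros [n b] [n' b'] [n'' b'']; simpl; now rewrite smulDr.
  - intros [n b]; simpl; now rewrite smul0l.
  - intros [n b]; simpl; now rewrite smul0r.
Defined.

(* The kernel is generated by [y = (0, 1, 0)] as a left [B]-semimodule: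
   [s b * y = (b, 0, 0)]. *)
Definition leftNat : SRng.
Proof.
  refine {| car := ((B * nat) * B)%type;
            sadd := fun '((u, n), b) '((u', n'), b') =>
                      ((sadd u u', n + n')%nat, sadd b b');
            szero := ((szero, 0%nat), szero);
            smul := fun '((_, _), b) '((u', n'), b') =>
                      ((sadd (smul b u') (natmul n' b), 0%nat), smul b b') |}.
  - intros [[u n] b] [[u' n'] b'] [[u'' n''] b'']; simpl.
    now rewrite !saddA, Nat.add_assoc.
  - intros [[u n] b] [[u' n'] b']; simpl.
    now rewrite (saddC _ u), (saddC _ b), Nat.add_comm.
  - intros [[u n] b]; simpl; now rewrite !sadd0, Nat.add_0_r.
  - intros [[u n] b] [[u' n'] b'] [[u'' n''] b'']; simpl.
    now rewrite smulDr, smul_natmulr, sadd0, !smulA.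
  - intros [[u n] b] [[u' n'] b'] [[u'' n''] b'']; simpl.
    now rewrite smulDl, natmulDl, saddACA, smulDl.
  - intros [[u n] b] [[u' n'] b'] [[u'' n''] b'']; simpl.
    now rewrite smulDr, natmulDr, saddACA, smulDr.
  - intros [[u n] b]; simpl; now rewrite smul0l, natmul0, sadd0, smul0l.
  - intros [[u n] b]; simpl; now rewrite !smul0r, sadd0.
Defined.

Definition pairing : SRng.
Proof.
  refine {| car := ((nat * B) * B)%type;
            sadd := fun '((n, u), w) '((n', u'), w') =>
                      ((n + n', sadd u u')%nat, sadd w w');
            szero := ((0%nat, szero), szero);
            smul := fun '((n, _), _) '((_, u'), _) => ((0%nat, szero), natmul n u') |}.
  - intros [[n u] w] [[n' u'] w'] [[n'' u''] w'']; simpl.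
    now rewrite !saddA, Nat.add_assoc.
  - intros [[n u] w] [[n' u'] w']; simpl.
    now rewrite (saddC _ u), (saddC _ w), Nat.add_comm.
  - intros [[n u] w]; simpl; now rewrite !sadd0, Nat.add_0_r.
  - intros [[n u] w] [[n' u'] w'] [[n'' u''] w'']; simpl; now rewrite natmul0.
  - intros [[n u] w] [[n' u'] w'] [[n'' u''] w'']; simpl; now rewrite sadd0, natmulDr.
  - intros [[n u] w] [[n' u'] w'] [[n'' u''] w'']; simpl; now rewrite sadd0, natmulDl.
  - now intros [[n u] w].
  - intros [[n u] w]; simpl; now rewrite natmul0.
Defined.

Definition annNat_proj : hom annNat B.
Proof.
  refine {| fn := fun x : annNat => snd x |}.
  - now intros [] [].
  - reflexivity.
  - now intros [] [].
Defined.

Definition annNat_sec : hom B annNat.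
Proof. refine {| fn := fun b : B => ((0%nat, b) : annNat) |}; reflexivity. Defined.

Definition annNat_point : point B.
Proof. refine {| pA := annNat; pf := annNat_proj; ps := annNat_sec |}; reflexivity. Defined.

Definition leftNat_proj : hom leftNat B.
Proof.
  refine {| fn := fun x : leftNat => snd x |}.
  - now intros [[]] [[]].
  - reflexivity.
  - now intros [[]] [[]].
Defined.

Definition leftNat_sec : hom B leftNat.
Proof.
  refine {| fn := fun b : B => (((szero, 0%nat), b) : leftNat) |}; intros; simpl.
  - now rewrite sadd0.
  - reflexivity.
  - now rewrite smul0r, sadd0.
Defined.

Definition leftNat_point : point B.
Proof. refine {| pA := leftNat; pf := leftNat_proj; ps := leftNat_sec |}; reflexivity. Defined.

Definition pairing_point : point zeroSRng.
Proof.
  refine {| pA := pairing; pf := terminal_hom pairing; ps := initial_hom pairing |}.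
  now intros [].
Defined.

Lemma annNat_Schreier : Schreier annNat_point.
Proof.
  intros [n b]; exists ((n, szero) : annNat); simpl; split.
  - split; [reflexivity | now rewrite Nat.add_0_r, sadd0l].
  - intros [n' b'] [Hf Ha]; simpl in Hf, Ha; subst b'.
    injection Ha; intros; f_equal; lia.
Qed.

Lemma leftNat_Schreier : Schreier leftNat_point.
Proof.
  intros [[u n] b]; exists (((u, n), szero) : leftNat); simpl; split.
  - split; [reflexivity | now rewrite sadd0, Nat.add_0_r, sadd0l].
  - intros [[u' n'] b'] [Hf Ha]; simpl in Hf, Ha; subst b'; injection Ha; intros.
    rewrite !sadd0 in *; subst; do 2 f_equal; lia.
Qed.

Let h := initial_hom B.

Definition annNat_to_pairing : hom (pA (pullback h annNat_point)) (pA pairing_point).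
Proof.
  refine {| fn := fun x : pbSRng h annNat_point =>
                    ((fst (fst (proj1_sig x)), szero), szero) : pairing |}.
  - intros [[[n b] []] p] [[[n' b'] []] p']; simpl; now rewrite !sadd0.
  - reflexivity.
  - intros [[[n b] []] p] [[[n' b'] []] p']; simpl; now rewrite natmul0.
Defined.

Definition leftNat_to_pairing : hom (pA (pullback h leftNat_point)) (pA pairing_point).
Proof.
  refine {| fn := fun x : pbSRng h leftNat_point =>
                    ((0%nat, fst (fst (fst (proj1_sig x)))), szero) : pairing |}.
  - intros [[[[u n] b] []] p] [[[[u' n'] b'] []] p']; simpl; now rewrite !sadd0.
  - reflexivity.
  - intros [[[[u n] b] []] p] [[[[u' n'] b'] []] p']; simpl in *; subst b.
    now rewrite smul0l, natmul0, sadd0.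
Defined.

Lemma no_right_adjoint_initial (b0 : B) : b0 <> szero -> ~ SHasRightAdjoint h.
Proof.
  intros b0_neq0 adj.
  destruct (adj pairing_point (Schreier_over_zero _)) as [R [eps [_ univ]]].
  destruct (univ _ annNat_Schreier (zero_point_phom annNat_to_pairing))
    as [g1 [eps_g1 _]].
  destruct (univ _ leftNat_Schreier (zero_point_phom leftNat_to_pairing))
    as [g2 [eps_g2 _]].
  set (x := ((1%nat, szero) : pA annNat_point)).
  set (y := (((szero, 1%nat), szero) : pA leftNat_point)).
  set (z := (((b0, 0%nat), szero) : pA leftNat_point)).
  assert (x_ann : smul x (ps annNat_point b0) = szero)
    by (simpl; now rewrite smul0l).
  assert (z_gen : smul (ps leftNat_point b0) y = z)
    by (unfold z; simpl; now rewrite smul0r, sadd0l, sadd0).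
  assert (R_xz : smul (g1 x) (g2 z) = szero).
  { rewrite <- z_gen, <- phom_smul_sectionl, smulA, phom_smul_sectionr, x_ann.
    now rewrite fn_zero, smul0l. }
  assert (pb_xz : smul (pullback_map h g1 (exist _ (x, tt) eq_refl))
                       (pullback_map h g2 (exist _ (z, tt) eq_refl)) = szero).
  { apply pb_eq; simpl; f_equal; exact R_xz. }
  apply (f_equal eps) in pb_xz.
  rewrite fn_mul, fn_zero, eps_g1, eps_g2 in pb_xz.
  simpl in pb_xz; injection pb_xz; now rewrite sadd0.
Qed.

End Counterexample.

Definition natSRng : SRng.
Proof.
  refine {| car := nat; sadd := Nat.add; szero := 0%nat; smul := Nat.mul |};
    intros; lia.
Defined.

Theorem mainTheorem7 :
  (forall B : SRng, is_ring B -> nontrivial B ->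
     ~ SHasRightAdjoint (initial_hom B)) /\
  ~ S_LACC.
Proof.
  split.
  - intros B _ [b0 b0_neq0]; exact (@no_right_adjoint_initial B b0 b0_neq0).
  - intros lacc; apply (@no_right_adjoint_initial natSRng 1%nat).
    + discriminate.
    + apply lacc.
Qed.
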